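(* Let $S>0$, let $I\ge 1$, let $N_1,\dots,N_I$ be positive integers and let $\theta_1>\theta_2>\dots>\theta_I>0$. Consider the single pricing problem $$\max_{p>0,\ \{n_i\}}\ p\sum_{i=1}^I n_i s_i\quad\text{s.t.}\quad s_i=\Big(\frac{\theta_i}{p}-1\Big)^+,\ \ n_i\in\{0,1,\dots,N_i\}\ (i=1,\dots,I),\quad \sum_{i=1}^I n_i s_i\le S,$$ where $(x)^+=\max(x,0)$. For $k\in\{1,\dots,I\}$ let $p(k)=\frac{\sum_{i=1}^k N_i\theta_i}{S+\sum_{i=1}^k N_i}$, let $K^{sp}=\max\{k\in\{1,\dots,I\}:\theta_k>p(k)\}$ (this set contains $k=1$), and let $p^*=p(K^{sp})$. Then this problem has an optimal solution in which $n_i=N_i$ for all $i$, the price is $p^*$, and the resulting allocations are $s_i=\theta_i/p^*-1$ for $i=1,\dots,K^{sp}$ and $s_i=0$ for $i=K^{sp}+1,\dots,I$.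
   Context: Each user of group $i$ has utility $\theta_i\ln(1+s)$ for $s$ units of resource and, facing unit price $p$, demands $(\theta_i/p-1)^+$. The service provider has total resource $S$, charges one common unit price $p$ to all users, and chooses the number $n_i$ of admitted users of each group. *)

From mathcomp Require Import all_boot all_order all_algebra.
Set Implicit Arguments. Unset Strict Implicit. Unset Printing Implicit Defensive.
Import Order.TTheory GRing.Theory Num.Theory.
Local Open Scope ring_scope.

(* Groups are indexed by 'I_I (group i+1 of the paper is ordinal i). *)

Definition pos_part {R : realFieldType} (x : R) : R := Num.max x 0.

Definition alloc {R : realFieldType} {I : nat} (theta : 'I_I -> R) (p : R) (i : 'I_I) : R :=
  pos_part (theta i / p - 1).

Definition total_alloc {R : realFieldType} {I : nat} (theta : 'I_I -> R)
  (p : R) (n : 'I_I -> nat) : R :=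
  \sum_(i < I) (n i)%:R * alloc theta p i.

Definition revenue {R : realFieldType} {I : nat} (theta : 'I_I -> R)
  (p : R) (n : 'I_I -> nat) : R := p * total_alloc theta p n.

Definition feasible {R : realFieldType} {I : nat} (S : R) (N : 'I_I -> nat)
  (theta : 'I_I -> R) (p : R) (n : 'I_I -> nat) : Prop :=
  0 < p /\ (forall i, (n i <= N i)%N) /\ total_alloc theta p n <= S.

(* p(k) = (sum_{i=1}^k N_i theta_i) / (S + sum_{i=1}^k N_i), k in 1..I
   (paper index i corresponds to ordinal i-1, so "i <= k" becomes "i < k") *)
Definition pk {R : realFieldType} {I : nat} (S : R) (N : 'I_I -> nat)
  (theta : 'I_I -> R) (k : nat) : R :=
  (\sum_(i < I | (i < k)%N) (N i)%:R * theta i) / (S + \sum_(i < I | (i < k)%N) (N i)%:R).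

(* K^sp = max {k in 1..I : theta_k > p(k)}; writing k = j+1 with j : 'I_I,
   theta_k is theta j. *)
Definition Ksp {R : realFieldType} {I : nat} (S : R) (N : 'I_I -> nat)
  (theta : 'I_I -> R) : nat :=
  (\max_(j < I | pk S N theta j.+1 < theta j) j).+1.

(* Revenue is p * sum n_i (theta_i/p - 1)^+ = sum n_i (theta_i - p)^+, which is nonincreasing in
   the price and in the n_i; hence any price at which the full population N exactly exhausts the
   capacity S is optimal: a higher price earns less per user, and a lower price earns at most
   p * S since the allocation is capped by S.  The price p* = p(K^sp) is such a price: the
   maximality of K^sp, via a mediant argument, places p* below theta_i exactly for i <= K^sp,
   and the defining formula of p(K^sp) then makes the total demand at p* equal to S. *)
From mathcomp Require Import all_boot all_order all_algebra.
From mathcomp Require Import ring lra.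
Set Implicit Arguments. Unset Strict Implicit. Unset Printing Implicit Defensive.
Import Order.TTheory GRing.Theory Num.Theory.
Local Open Scope ring_scope.

Lemma big_ord_lt_succ (V : nmodType) (I : nat) (F : 'I_I -> V) (j : 'I_I) :
  \sum_(i < I | (i < j.+1)%N) F i = \sum_(i < I | (i < j)%N) F i + F j.
Proof.
rewrite (bigD1 j) //= addrC; congr (_ + _); apply: eq_bigl => i /=.
case: (eqVneq i j) => [->|hne]; first by rewrite ltnn andbF.
by rewrite andbT ltnS leq_eqVlt -[val i == val j]/(i == j) (negbTE hne).
Qed.

Lemma mediant_ge (R : realFieldType) (a d m x : R) : 0 < d -> 0 < m ->
  (x <= (a + m * x) / (d + m)) = (x <= a / d).
Proof.
move=> d0 m0; rewrite !ler_pdivlMr ?addr_gt0 //.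
by apply/idP/idP => h; lra.
Qed.

Section PositivePart.
Variable R : realFieldType.

Lemma pos_part_ge0 (x : R) : 0 <= pos_part x.
Proof. by rewrite /pos_part le_max lexx orbT. Qed.

Lemma ler_pos_part (x y : R) : x <= y -> pos_part x <= pos_part y.
Proof. by move=> h; rewrite /pos_part ge_max !le_max lexx orbT andbT h. Qed.

Lemma mulr_pos_part_divl_sub1 (p x : R) : 0 < p ->
  p * pos_part (x / p - 1) = pos_part (x - p).
Proof.
move=> hp; rewrite /pos_part; case: (lerP x p) => h.
  rewrite max_r; last by rewrite subr_le0 ler_pdivrMr // mul1r.
  by rewrite max_r ?mulr0 // subr_le0.
rewrite max_l; last by rewrite subr_ge0 ler_pdivlMr // mul1r ltW.
rewrite max_l; last by rewrite subr_ge0 ltW.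
by rewrite mulrBr mulr1 mulrC -mulrA mulVf ?mulr1 // gt_eqF.
Qed.

End PositivePart.

Section Revenue.
Variables (R : realFieldType) (I : nat) (theta : 'I_I -> R).

Lemma revenueE (p : R) (n : 'I_I -> nat) : 0 < p ->
  revenue theta p n = \sum_(i < I) (n i)%:R * pos_part (theta i - p).
Proof.
move=> hp; rewrite /revenue /total_alloc mulr_sumr; apply: eq_bigr => i _.
by rewrite mulrCA /alloc mulr_pos_part_divl_sub1.
Qed.

Lemma total_alloc_ge0 (p : R) (n : 'I_I -> nat) : 0 <= total_alloc theta p n.
Proof. by apply: sumr_ge0 => i _; rewrite mulr_ge0 ?ler0n ?pos_part_ge0. Qed.

Lemma revenue_le_of_total_alloc_eq (S p q : R) (N n : 'I_I -> nat) :
  0 < p -> total_alloc theta p N = S -> feasible S N theta q n ->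
  revenue theta q n <= revenue theta p N.
Proof.
move=> hp hpS [hq [hn hqS]]; case: (lerP p q) => hpq.
  rewrite !revenueE //; apply: ler_sum => i _.
  by rewrite ler_pM ?ler0n ?pos_part_ge0 ?ler_nat ?ler_pos_part ?lerB.
rewrite /revenue hpS; have := total_alloc_ge0 q n; nra.
Qed.

End Revenue.

Section SinglePricing.
Variables (R : realFieldType) (I : nat) (S : R) (N : 'I_I -> nat) (theta : 'I_I -> R).
Hypotheses (hI : (1 <= I)%N) (hS : 0 < S) (hN : forall i, (0 < N i)%N).
Hypothesis htheta_dec : forall i j : 'I_I, (i < j)%N -> theta j < theta i.
Hypothesis htheta_pos : forall i, 0 < theta i.

Let Ngt0 i : 0 < (N i)%:R :> R. Proof. by rewrite ltr0n. Qed.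

Let den_gt0 (k : nat) : 0 < S + \sum_(i < I | (i < k)%N) (N i)%:R.
Proof. by rewrite ltr_wpDr // sumr_ge0 // => i _; rewrite ltW. Qed.

Lemma pk_succ_gt0 (j : 'I_I) : 0 < pk S N theta j.+1.
Proof.
rewrite /pk divr_gt0 // big_ord_lt_succ ltr_wpDl ?mulr_gt0 //.
by rewrite sumr_ge0 // => i _; rewrite mulr_ge0 // ltW.
Qed.

Lemma theta_le_pk_succE (j : 'I_I) :
  (theta j <= pk S N theta j.+1) = (theta j <= pk S N theta j).
Proof. by rewrite /pk !big_ord_lt_succ addrA mediant_ge. Qed.

Lemma Ksp_arg_max : exists2 jm : 'I_I, Ksp S N theta = jm.+1 &
  pk S N theta jm.+1 < theta jm /\
  forall j : 'I_I, pk S N theta j.+1 < theta j -> (j <= jm)%N.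
Proof.
pose j0 : 'I_I := Ordinal hI.
have P0 : pk S N theta j0.+1 < theta j0.
  rewrite ltNge theta_le_pk_succE -ltNge /pk big_pred0 // mul0r.
  exact: htheta_pos.
case: (@arg_maxnP _ j0 (fun j : 'I_I => pk S N theta j.+1 < theta j) val P0).
move=> jm Pjm maxj; exists jm => //.
rewrite /Ksp; congr _.+1; apply/eqP; rewrite eqn_leq (leq_bigmax_cond jm Pjm) andbT.
by apply/bigmax_leqP => i Pi; exact: maxj.
Qed.

Lemma pk_Ksp_gt0 : 0 < pk S N theta (Ksp S N theta).
Proof. by case: Ksp_arg_max => jm -> _; exact: pk_succ_gt0. Qed.

Lemma theta_gt_pk_Ksp (i : 'I_I) :
  (i < Ksp S N theta)%N -> pk S N theta (Ksp S N theta) < theta i.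
Proof.
case: Ksp_arg_max => jm -> [Pjm _]; rewrite ltnS leq_eqVlt => /orP [/eqP e|h].
  by rewrite (val_inj e).
exact: lt_trans Pjm (htheta_dec h).
Qed.

Lemma theta_le_pk_Ksp (i : 'I_I) :
  (Ksp S N theta <= i)%N -> theta i <= pk S N theta (Ksp S N theta).
Proof.
case: Ksp_arg_max => jm -> [_ maxj] hi.
have hjn : (jm.+1 < I)%N := leq_ltn_trans hi (ltn_ord i).
pose jn : 'I_I := Ordinal hjn.
have theta_jn : theta jn <= pk S N theta jm.+1.
  rewrite -theta_le_pk_succE leNgt; apply/negP => /maxj.
  by rewrite ltnn.
case: (ltngtP jm.+1 i) hi => // [h _|e _].
  exact: le_trans (ltW (@htheta_dec jn i h)) theta_jn.
by rewrite (_ : i = jn) //; apply: val_inj.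
Qed.

Lemma alloc_pk_Ksp (i : 'I_I) :
  alloc theta (pk S N theta (Ksp S N theta)) i =
  if (i < Ksp S N theta)%N then theta i / pk S N theta (Ksp S N theta) - 1 else 0.
Proof.
have p0 := pk_Ksp_gt0; rewrite /alloc /pos_part; case: ifPn => h.
  by rewrite max_l // subr_ge0 ler_pdivlMr // mul1r ltW // theta_gt_pk_Ksp.
by rewrite max_r // subr_le0 ler_pdivrMr // mul1r theta_le_pk_Ksp // leqNgt.
Qed.

Lemma total_alloc_pk_Ksp :
  total_alloc theta (pk S N theta (Ksp S N theta)) N = S.
Proof.
set K := Ksp S N theta; set p := pk S N theta K.
have p0 : 0 < p := pk_Ksp_gt0.
rewrite /total_alloc (eq_bigr (fun i : 'I_I =>
    if (i < K)%N then (N i)%:R * (theta i / p - 1) else 0)); last first.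
  by move=> i _; rewrite alloc_pk_Ksp; case: ifP; rewrite ?mulr0.
rewrite -big_mkcond /=.
under eq_bigr do rewrite mulrBr mulr1 mulrA.
rewrite sumrB -mulr_suml; move: p0; rewrite /p /pk.
have := den_gt0 K; set B := \sum_(i < I | _) _; set A := \sum_(i < I | _) _.
move=> d0 p0; have A0 : A != 0 by rewrite gt_eqF // -(@pmulr_lgt0 _ (S + B)^-1) ?invr_gt0.
by field; rewrite A0 gt_eqF.
Qed.

End SinglePricing.

Theorem theorem2 (R : realFieldType) (I : nat) (S : R) (N : 'I_I -> nat)
  (theta : 'I_I -> R)
  (hI : (1 <= I)%N) (hS : 0 < S) (hN : forall i, (0 < N i)%N)
  (htheta_dec : forall i j : 'I_I, (i < j)%N -> theta j < theta i)
  (htheta_pos : forall i, 0 < theta i) :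
  let K := Ksp S N theta in
  let pstar := pk S N theta K in
  [/\ feasible S N theta pstar N,
      (forall (p : R) (n : 'I_I -> nat), feasible S N theta p n ->
         revenue theta p n <= revenue theta pstar N)
    & (forall i : 'I_I, alloc theta pstar i =
         if (i < K)%N then theta i / pstar - 1 else 0)].
Proof.
move=> K pstar.
have pstar_gt0 : 0 < pstar := pk_Ksp_gt0 hI hS hN htheta_pos.
have htot : total_alloc theta pstar N = S :=
  total_alloc_pk_Ksp hI hS hN htheta_dec htheta_pos.
split.
- by split => //; split => [i|]; rewrite ?htot.
- by move=> p n; apply: revenue_le_of_total_alloc_eq.
- exact: alloc_pk_Ksp hI hS hN htheta_dec htheta_pos.
Qed.
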